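(* For all $n$, there is a bijection between $\mathbf{I}_n(120)$ and $S_n(\underline{143}2)$; in particular $|\mathbf{I}_n(120)|=|S_n(\underline{143}2)|$.
   Context: $S_n$ is the set of permutations of $[n]$, and $\mathbf{I}_n$ the set of integer sequences $e_1\dots e_n$ with $0\le e_i<i$. $\mathbf{I}_n(120)$ is the set of $e\in\mathbf{I}_n$ with no $i$ such that $e_{i+2}<e_i<e_{i+1}$. A permutation $\pi$ contains the vincular pattern $\underline{143}2$ if there exist $i$ and $j>i+2$ with $\pi_i<\pi_j<\pi_{i+2}<\pi_{i+1}$; $S_n(\underline{143}2)$ is the set of $\pi\in S_n$ that do not contain it. *)

From mathcomp Require Import all_boot all_fingroup.
Set Implicit Arguments. Unset Strict Implicit. Unset Printing Implicit Defensive.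

(* Indices are 0-based: the paper's e_1 ... e_n is e_0 ... e_(n-1) here, and
   the paper's condition 0 <= e_i < i becomes e_i <= i (0-based i). *)

Definition is_invseq (n : nat) (e : n.-tuple 'I_n) : bool :=
  [forall i : 'I_n, (tnth e i : nat) <= i].

Definition avoids120 (n : nat) (e : n.-tuple 'I_n) : bool :=
  let s := map val e in
  [forall i : 'I_n, (i.+2 < n) ==>
     ~~ ((nth 0 s i.+2 < nth 0 s i) && (nth 0 s i < nth 0 s i.+1))].

Definition Inv120 (n : nat) : {set n.-tuple 'I_n} :=
  [set e | is_invseq e && avoids120 e].

Definition perm_seq (n : nat) (p : 'S_n) : seq nat :=
  [seq val (p i) | i <- enum 'I_n].

Definition contains1432 (n : nat) (p : 'S_n) : bool :=
  let s := perm_seq p in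
  [exists i : 'I_n, exists j : 'I_n,
     [&& i.+2 < j,
         nth 0 s i < nth 0 s j,
         nth 0 s j < nth 0 s i.+2
       & nth 0 s i.+2 < nth 0 s i.+1]].

Definition Av1432 (n : nat) : {set 'S_n} := [set p | ~~ contains1432 p].

From mathcomp Require Import all_boot all_fingroup.
From mathcomp Require Import zify.
Set Implicit Arguments. Unset Strict Implicit. Unset Printing Implicit Defensive.

(* The bijection is the (reversed) Lehmer code.  For p in S_n and a position
   x, let rinv p x be the number of positions j > x with p_j < p_x.  The code
   of p is the sequence e_k = rinv p (n-1-k); it is an inversion sequence,
   the code map is injective (p is recovered left to right from the counts)
   and, since both sets have n! elements, it maps S_n onto I_n.
   The key local fact is that an occurrence of 143-2 starting at position i,
   i.e. p_i < p_j < p_(i+2) < p_(i+1) for some j > i+2, happens exactly when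
   rinv p i < rinv p (i+2) < rinv p (i+1): the descent p_(i+2) < p_(i+1) is
   read off from the two adjacent counts, and given it, the witness j is what
   makes the count at i smaller than the count at i+2.  Reversing indices,
   this is the pattern e_(k+2) < e_k < e_(k+1) of the code, so the code maps
   S_n(143-2) onto I_n(120); the required bijection is its inverse. *)

Lemma card_ord_le n (x : 'I_n) : #|[set y : 'I_n | y <= x]| = x.+1.
Proof.
rewrite cardsE cardE /enum_mem size_filter -enumT.
rewrite (@eq_count _ _ (preim val (fun y => y <= x))) // -count_map.
rewrite val_enum_ord -size_filter.
by have := @filter_iota_leq n 0 x (ltn_ord x); rewrite add0n => ->; rewrite size_iota.
Qed.

Section LehmerCode.

Variable n : nat.
Implicit Types (p q : 'S_n) (i : 'I_n).

Definition entry p (k : nat) : nat := nth 0 (perm_seq p) k.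

Lemma entryE p i : entry p i = p i.
Proof. by rewrite /entry /perm_seq (nth_map i 0) ?size_enum_ord // nth_ord_enum. Qed.

Lemma entry_inj p a b : a < n -> b < n -> entry p a = entry p b -> a = b.
Proof.
move=> ltan ltbn.
rewrite -[a]/(nat_of_ord (Ordinal ltan)) -[b]/(nat_of_ord (Ordinal ltbn)) !entryE.
by move/val_inj/perm_inj => ->.
Qed.

Definition rinv p (x : nat) : nat :=
  #|[set j : 'I_n | (x < j) && (entry p j < entry p x)]|.

Lemma rinv_le p i : rinv p i <= n - i.+1.
Proof.
apply: (@leq_trans #|~: [set y : 'I_n | y <= i]|).
  apply: subset_leq_card; apply/subsetP => j.
  by rewrite !inE -ltnNge => /andP[].
by have := cardsC [set y : 'I_n | y <= i]; rewrite card_ord_le card_ord; lia.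
Qed.

(* Equivalently, rinv p i counts the values below p i that are not taken
   before position i; this is what lets us rebuild p from its counts. *)
Lemma rinv_values p i :
  rinv p i = #|[set v : 'I_n | (v < p i) && (v \notin p @: [set j : 'I_n | j < i])]|.
Proof.
rewrite /rinv -(card_imset _ (@perm_inj _ p)); apply: eq_card => v.
have [k ->] : exists k, v = p k by exists ((p^-1)%g v); rewrite permKV.
rewrite !inE !mem_imset; try exact: perm_inj.
rewrite !inE !entryE -leqNgt.
case: (ltngtP i k) => [ltik|ltki|/val_inj->]; last by rewrite ltnn.
- by case: (p k < p i); rewrite ?andbF //=; lia.
- by case: (p k < p i); rewrite ?andbF //=; lia.
Qed.

Lemma card_below_lt (T : {set 'I_n}) (x y : 'I_n) : x \notin T -> x < y ->
  #|[set v : 'I_n | (v < x) && (v \notin T)]| <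
  #|[set v : 'I_n | (v < y) && (v \notin T)]|.
Proof.
move=> xNT ltxy; apply: proper_card; apply/properP; split.
  apply/subsetP => v; rewrite !inE => /andP[ltvx ->]; rewrite andbT.
  exact: ltn_trans ltvx ltxy.
by exists x; rewrite !inE ?ltnn ?ltxy.
Qed.

Lemma rinv_inj p q : (forall i, rinv p i = rinv q i) -> p = q.
Proof.
move=> eq_rinv; apply/permP.
suff agree_below m i : i < m -> p i = q i by move=> i; apply: (agree_below n).
elim: m i => [|m IHm] i // ltim.
have [/IHm // | leim] := ltnP i m.
have same_prefix : p @: [set j : 'I_n | j < i] = q @: [set j : 'I_n | j < i].
  by apply: eq_in_imset => j; rewrite inE => ltji; apply: IHm; lia.
have := eq_rinv i; rewrite !rinv_values -same_prefix => eq_cnt.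
have pNT : p i \notin p @: [set j : 'I_n | j < i].
  by rewrite mem_imset ?inE ?ltnn //; exact: perm_inj.
have qNT : q i \notin p @: [set j : 'I_n | j < i].
  by rewrite same_prefix mem_imset ?inE ?ltnn //; exact: perm_inj.
apply/val_inj; case: (ltngtP (p i) (q i)) => // ltpq.
- by have := card_below_lt pNT ltpq; rewrite eq_cnt ltnn.
- by have := card_below_lt qNT ltpq; rewrite eq_cnt ltnn.
Qed.

Lemma code_entry_le p (k : 'I_n) : rinv p (rev_ord k) <= k.
Proof. by apply: leq_trans (rinv_le p (rev_ord k)) _; rewrite /=; lia. Qed.

Definition code p : n.-tuple 'I_n :=
  [tuple Ordinal (leq_ltn_trans (code_entry_le p k) (ltn_ord k)) | k < n].

Lemma code_nth p k : k < n -> nth 0 (map val (code p)) k = rinv p (n - k.+1).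
Proof.
move=> ltkn; rewrite (nth_map (Ordinal ltkn) 0) ?size_tuple //.
by rewrite -[k]/(nat_of_ord (Ordinal ltkn)) -tnth_nth tnth_mktuple.
Qed.

Lemma code_inj : injective code.
Proof.
move=> p q eq_code; apply: rinv_inj => i.
have := congr1 (fun e => val (tnth e (rev_ord i))) eq_code.
rewrite /= !tnth_mktuple /=.
by have -> : n - (n - i.+1).+1 = i by have := ltn_ord i; lia.
Qed.

Definition invseqs : {set n.-tuple 'I_n} := [set e | is_invseq e].

Lemma card_invseqs : #|invseqs| = n`!.
Proof.
pose tup (f : {ffun 'I_n -> 'I_n}) : n.-tuple 'I_n := [tuple f i | i < n].
have -> : invseqs = [set tup f | f in family (fun x : 'I_n => [pred y : 'I_n | y <= x])].
  apply/setP => e; rewrite inE; apply/idP/imsetP.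
  - move=> /forallP e_inv; exists [ffun i => tnth e i].
      by apply/familyP => i; rewrite ffunE; apply: e_inv.
    by apply: eq_from_tnth => i; rewrite tnth_mktuple ffunE.
  - case=> f /familyP f_fam ->.
    by apply/forallP => i; rewrite tnth_mktuple; apply: f_fam.
rewrite card_imset; last first.
  move=> f g eq_fg; apply/ffunP => i.
  by have := congr1 (fun e => tnth e i) eq_fg; rewrite !tnth_mktuple.
rewrite card_family foldrE big_map big_enum /= fact_prod big_add1 /= big_mkord.
by apply: eq_bigr => i _; rewrite -card_ord_le; apply: eq_card => y; rewrite inE.
Qed.

Lemma code_onto : code @: [set: 'S_n] = invseqs.
Proof.
apply/eqP; rewrite eqEcard; apply/andP; split.
  apply/subsetP => e /imsetP[p _ ->]; rewrite inE.
  by apply/forallP => k; rewrite tnth_mktuple; apply: code_entry_le.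
by rewrite card_imset ?card_invseqs ?cardsT ?card_Sn //; exact: code_inj.
Qed.

End LehmerCode.

Section Pattern.

Variables (n : nat) (p : 'S_n).

Lemma rinv_descent i : i.+1 < n ->
  (rinv p i.+1 < rinv p i) = (entry p i.+1 < entry p i).
Proof.
move=> lti1n; apply/idP/idP => [lt_rinv | desc].
- move: lt_rinv; apply: contraLR; rewrite -!leqNgt => asc.
  apply: subset_leq_card; apply/subsetP => k; rewrite !inE => /andP[ltik ltki].
  have nki1 : k != i.+1 :> nat by apply/eqP => eki1; move: ltki asc; rewrite eki1; lia.
  by apply/andP; split; lia.
- apply: proper_card; apply/properP; split.
    apply/subsetP => k; rewrite !inE => /andP[ltik ltki].
    by apply/andP; split; lia.
  by exists (Ordinal lti1n); rewrite !inE /= ?ltnSn ?desc // ltnn.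
Qed.

Lemma rinv_window i : i.+2 < n -> entry p i.+2 < entry p i.+1 ->
  (rinv p i < rinv p i.+2) =
  [exists j : 'I_n, [&& i.+2 < j, entry p i < entry p j & entry p j < entry p i.+2]].
Proof.
move=> lti2n desc; apply/idP/idP => [lt_rinv | /existsP[j /and3P[ltj lt_ij lt_ji2]]].
- move: lt_rinv; apply: contraLR; rewrite negb_exists -leqNgt => /forallP no_window.
  apply: subset_leq_card.
  apply/subsetP => k; rewrite !inE => /andP[ltk lt_ki2].
  have := no_window k; rewrite ltk lt_ki2 andbT /= -leqNgt => le_ki.
  have neq_ki : entry p k != entry p i.
    apply/eqP => /entry_inj eq_ki.
    by have := eq_ki (ltn_ord k) (ltn_trans (ltnSn _) (ltn_trans (ltnSn _) lti2n)); lia.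
  by apply/andP; split; [lia | rewrite ltn_neqAle neq_ki].
- apply: proper_card; apply/properP; split.
    apply/subsetP => k; rewrite !inE => /andP[ltik lt_ki].
    have nki1 : k != i.+1 :> nat by apply/eqP => e; move: lt_ki; rewrite e; lia.
    have nki2 : k != i.+2 :> nat by apply/eqP => e; move: lt_ki; rewrite e; lia.
    by apply/andP; split; lia.
  by exists j; rewrite !inE ?ltj ?lt_ji2 /=; [| apply/negP => /andP[_]; lia].
Qed.

Definition rinv_triple (i : nat) : bool :=
  (rinv p i < rinv p i.+2) && (rinv p i.+2 < rinv p i.+1).

Lemma occurrence1432_rinv i : i.+2 < n ->
  [exists j : 'I_n, [&& i.+2 < j, entry p i < entry p j & entry p j < entry p i.+2]]
    && (entry p i.+2 < entry p i.+1)
  = rinv_triple i.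
Proof.
move=> lti2n; rewrite /rinv_triple (rinv_descent lti2n).
case desc: (entry p i.+2 < entry p i.+1); last by rewrite !andbF.
by rewrite !andbT rinv_window.
Qed.

End Pattern.

Lemma exists_window_rev n (P : nat -> bool) :
  [exists i : 'I_n, (i.+2 < n) && P i] = [exists i : 'I_n, (i.+2 < n) && P (n - i.+3)].
Proof.
apply/existsP/existsP => -[i /andP[lti2n Pi]]; have ltin : n - i.+3 < n by lia.
- exists (Ordinal ltin) => /=.
  have -> : n - (n - i.+3).+3 = i by lia.
  by rewrite Pi andbT; lia.
- by exists (Ordinal ltin); rewrite /= Pi andbT; lia.
Qed.

Section Avoidance.

Variables (n : nat) (p : 'S_n).

Definition rinv_pattern : bool := [exists i : 'I_n, (i.+2 < n) && rinv_triple p i].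

Lemma contains1432_rinv : contains1432 p = rinv_pattern.
Proof.
apply: eq_existsb => i; case: (ltnP i.+2 n) => [lti2n | le_n_i2]; last first.
  apply/negbTE; rewrite negb_exists; apply/forallP => j.
  by have := ltn_ord j; case: (ltnP i.+2 j) => //; lia.
rewrite /= -occurrence1432_rinv // /entry; apply/existsP/andP.
- by case=> j /and4P[? ? ? desc]; split => //; apply/existsP; exists j; apply/and3P.
- by case=> /existsP[j /and3P[? ? ?] desc]; exists j; apply/and4P.
Qed.

Lemma avoids120_code : avoids120 (code p) = ~~ rinv_pattern.
Proof.
rewrite /rinv_pattern (@exists_window_rev n (rinv_triple p)) negb_exists.
apply: eq_forallb => k; case: (ltnP k.+2 n) => [ltk2n | //].
rewrite /rinv_triple !code_nth; try lia.
have -> : n - k.+1 = (n - k.+3).+2 by lia.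
by have -> : n - k.+2 = (n - k.+3).+1 by lia.
Qed.

End Avoidance.

Lemma Inv120_code_image n : Inv120 n = [set code p | p in Av1432 n].
Proof.
apply/setP => e; apply/idP/imsetP.
- rewrite inE => /andP[e_inv e_av].
  have : e \in invseqs n by rewrite inE.
  rewrite -code_onto => /imsetP[p _ def_e]; exists p => //.
  by rewrite inE contains1432_rinv -avoids120_code -def_e.
- case=> p; rewrite inE contains1432_rinv -avoids120_code => p_av ->.
  have : code p \in invseqs n by rewrite -code_onto imset_f.
  by rewrite !inE p_av andbT.
Qed.

Lemma code_Av1432 n (p : {p : 'S_n | p \in Av1432 n}) : code (val p) \in Inv120 n.
Proof. by rewrite Inv120_code_image imset_f ?(valP p). Qed.

Definition code_av n (p : {p : 'S_n | p \in Av1432 n}) : {e : n.-tuple 'I_n | e \in Inv120 n} :=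
  exist _ (code (val p)) (code_Av1432 p).

Lemma card_Inv120 n : #|Inv120 n| = #|Av1432 n|.
Proof. by rewrite Inv120_code_image card_imset //; exact: code_inj. Qed.

Lemma code_av_bij n : bijective (@code_av n).
Proof.
apply: inj_card_bij; last by rewrite !card_sig card_Inv120.
by move=> p q /(congr1 val) /code_inj /val_inj.
Qed.

Theorem mainTheorem20 (n : nat) :
  (exists f : {e : n.-tuple 'I_n | e \in Inv120 n} ->
              {p : 'S_n | p \in Av1432 n}, bijective f)
  /\ #|Inv120 n| = #|Av1432 n|.
Proof.
split; last exact: card_Inv120.
have [decode codeK decodeK] := code_av_bij n.
by exists decode; exists (@code_av n).
Qed.
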